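(* Let $X \subseteq \mathbb{P}^r$ be a projective variety of dimension $n$ over $\mathbb{C}$, and $p \in X$ a closed point. Suppose $m$ is a positive integer such that $\mathfrak{m}_{X,p}^m \subseteq J$ for every minimal reduction $J$ of $\mathfrak{m}_{X,p}$. If $L\subseteq\mathbb{P}^r$ is a reduction linear subspace at $(X,p)$, then $ll(\mathcal{O}_{X\cap L,p}) \leq m-1$.
   Context: For an Artinian local ring $(A,\mathfrak{m})$, the Loewy length is $ll(A):=\max\{i\mid \mathfrak{m}^i\neq 0\}$ (with $ll(A)=0$ if $A$ is a field). For a Noetherian local ring $(R,\mathfrak{m})$, an ideal $J\subseteq\mathfrak{m}$ is a reduction of $\mathfrak{m}$ if $\mathfrak{m}^{k+1}=J\mathfrak{m}^k$ for some $k\geq 0$; a minimal reduction is a reduction minimal with respect to inclusion. For $p\in X$ and a linear subspace $L\subseteq\mathbb{P}^r$ through $p$ cut out by linear forms $l_1,\dots,l_k$, let $\bar l_i\in\mathfrak{m}_{X,p}$ be their images (via $\mathfrak{m}_{X,p}=\mathfrak{m}_{\mathbb{P}^r,p}/I_{X,p}$); $L$ is a reduction linear subspace at $(X,p)$ if $(\bar l_1,\dots,\bar l_k)$ is a reduction of $\mathfrak{m}_{X,p}$. $X\cap L$ is the scheme-theoretic intersection. *)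

From HB Require Import structures.
From mathcomp Require Import all_boot all_order all_algebra.
From mathcomp Require Import reals complex mpoly.
Set Implicit Arguments.
Unset Strict Implicit.
Unset Printing Implicit Defensive.
Import Order.TTheory GRing.Theory Num.Theory.
Local Open Scope ring_scope.

(* Throughout: C := complex R (R : realType), P^r has homogeneous coordinate
   ring S = {mpoly C[r.+1]}, and all local rings at a point of P^r are
   realised inside the fraction field Frac(S) = {fraction S}.              *)

Notation homcoord R r := {mpoly (complex R)[r.+1]}.
Notation fracfield R r := {fraction (homcoord R r)}.

Definition tofrac (R : realType) (r : nat) (f : homcoord R r) : fracfield R r :=
  @FracField.tofrac (homcoord R r) f.
Local Notation "x %:F" := (tofrac x).

Definition is_ideal (R : realType) (r : nat) (I : pred (homcoord R r)) : Prop :=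
  [/\ 0 \in I,
      (forall f g, f \in I -> g \in I -> f + g \in I) &
      (forall a f, f \in I -> a * f \in I)].

Definition is_homogeneous_ideal (R : realType) (r : nat)
    (I : pred (homcoord R r)) : Prop :=
  is_ideal I /\ forall f d, f \in I -> pihomog mdeg d f \in I.

Definition is_prime_ideal (R : realType) (r : nat) (I : pred (homcoord R r)) : Prop :=
  is_ideal I /\ 1 \notin I /\
  forall f g, f * g \in I -> f \in I \/ g \in I.

(* X = V_+(I) subset P^r is a projective variety: I homogeneous prime.     *)
Definition projective_variety (R : realType) (r : nat) (I : pred (homcoord R r)) : Prop :=
  is_homogeneous_ideal I /\ is_prime_ideal I.

(* x : C^{r+1} \ {0} represents the closed point [x] of P^r *)
Definition proj_point (R : realType) (r : nat) (x : 'I_r.+1 -> complex R) : Prop :=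
  exists i, x i != 0.

Definition point_of (R : realType) (r : nat) (I : pred (homcoord R r))
    (x : 'I_r.+1 -> complex R) : Prop :=
  proj_point x /\ forall f, f \in I -> f.@[x] = 0.

Definition loc_ring (R : realType) (r : nat) (x : 'I_r.+1 -> complex R)
    (u : fracfield R r) : Prop :=
  exists (d : nat) (f g : homcoord R r),
    [/\ f \is d.-homog, g \is d.-homog, g.@[x] != 0 & u = f%:F / g%:F].

Definition loc_max (R : realType) (r : nat) (x : 'I_r.+1 -> complex R)
    (u : fracfield R r) : Prop :=
  exists (d : nat) (f g : homcoord R r),
    [/\ f \is d.-homog, g \is d.-homog, g.@[x] != 0, f.@[x] = 0
      & u = f%:F / g%:F].

Definition loc_ideal_of (R : realType) (r : nat) (I : pred (homcoord R r))
    (x : 'I_r.+1 -> complex R) (u : fracfield R r) : Prop :=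
  exists (d : nat) (f g : homcoord R r),
    [/\ f \is d.-homog, g \is d.-homog, g.@[x] != 0, f \in I
      & u = f%:F / g%:F].

Section IdealCalculus.
Variables (R : realType) (r : nat).
Local Notation F := (fracfield R r).

Definition subI (A B : F -> Prop) : Prop := forall u, A u -> B u.
Definition eqI (A B : F -> Prop) : Prop := forall u, A u <-> B u.

Definition ideal_in (O A : F -> Prop) : Prop :=
  [/\ subI A O, A 0,
      (forall u v, A u -> A v -> A (u + v)) &
      (forall a u, O a -> A u -> A (a * u))].

Definition sumI (A B : F -> Prop) (u : F) : Prop :=
  exists a b, [/\ A a, B b & u = a + b].

Definition prodI (A B : F -> Prop) (u : F) : Prop :=
  exists (k : nat) (a b : 'I_k -> F),
    (forall i, A (a i) /\ B (b i)) /\ u = \sum_(i < k) a i * b i.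

Fixpoint powI (O A : F -> Prop) (k : nat) : F -> Prop :=
  match k with
  | 0 => O
  | k'.+1 => prodI A (powI O A k')
  end.

Definition genI (O : F -> Prop) (k : nat) (g : 'I_k -> F) (u : F) : Prop :=
  exists c : 'I_k -> F, (forall i, O (c i)) /\ u = \sum_(i < k) c i * g i.

End IdealCalculus.

(* Ideals of the quotient O_{X,x} are identified with the ideals of O_{P^r,x}
   containing I_{X,x}; the image of an ideal A of O_{P^r,x} in O_{X,x}
   corresponds to A + I_{X,x}.  m_{X,x} corresponds to m_{P^r,x}.           *)

Section LocalX.
Variables (R : realType) (r : nat) (I : pred (homcoord R r))
          (x : 'I_r.+1 -> complex R).
Local Notation O := (loc_ring x).
Local Notation IX := (loc_ideal_of I x).
Local Notation mP := (loc_max x).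

Definition idealX_in_max (J : fracfield R r -> Prop) : Prop :=
  [/\ ideal_in O J, subI IX J & subI J mP].

Definition reductionX (J : fracfield R r -> Prop) : Prop :=
  idealX_in_max J /\
  exists k : nat,
    eqI (sumI (powI O mP k.+1) IX) (sumI (prodI J (powI O mP k)) IX).

Definition minimal_reductionX (J : fracfield R r -> Prop) : Prop :=
  reductionX J /\
  forall J', reductionX J' -> subI J' J -> subI J J'.

(* the affine chart used to dehomogenise: h = x_j for the first j with
   x_j <> 0; the image of a linear form l in m_{X,x} is l/h *)
Definition chart_index : 'I_r.+1 :=
  odflt ord0 [pick j | x j != 0].

Definition lbar (l : homcoord R r) : fracfield R r :=
  l%:F / ('X_chart_index)%:F.

(* the ideal (lbar_1, ..., lbar_k) of O_{X,x}, i.e. the ideal of X cap L at x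
   (as an ideal of O_{P^r,x} containing I_{X,x}) *)
Definition lin_idealX (k : nat) (l : 'I_k -> homcoord R r) : fracfield R r -> Prop :=
  sumI (genI O (fun i => lbar (l i))) IX.

(* L = V_+(l_1,...,l_k) is a linear subspace through [x] *)
Definition linear_subspace_through (k : nat) (l : 'I_k -> homcoord R r) : Prop :=
  forall i, l i \is 1.-homog /\ (l i).@[x] = 0.

Definition reduction_linear_subspace (k : nat) (l : 'I_k -> homcoord R r) : Prop :=
  linear_subspace_through l /\ reductionX (lin_idealX l).

(* ll(O_{X,x}/K) <= b, where K is an ideal of O_{X,x} (an ideal of
   O_{P^r,x} containing I_{X,x}):  every i with (m/K)^i <> 0, i.e. with
   m^i not contained in K, satisfies i <= b. *)
Definition loewy_length_le (K : fracfield R r -> Prop) (b : nat) : Prop :=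
  forall i : nat, ~ subI (powI O mP i) K -> (i <= b)%N.

End LocalX.

From Pilot Require Import Defs.
From HB Require Import structures.
From mathcomp Require Import all_boot all_order all_algebra.
From mathcomp Require Import reals complex mpoly.
From mathcomp Require Import ring zify.
From Stdlib Require Import Classical.
Import GRing.Theory Num.Theory.
Set Implicit Arguments.
Unset Strict Implicit.
Unset Printing Implicit Defensive.
Local Open Scope ring_scope.

(** The ideal [J_L] of [X ∩ L] at [p] is a reduction of [m = m_{X,p}]
    generated by finitely many elements; we show that it contains a minimal
    reduction [J].  Then [m^m ⊆ J ⊆ J_L] by hypothesis, so [m^i ⊆ J_L] for
    all [i >= m], i.e. [ll(O_{X∩L,p}) <= m - 1].

    To find [J], let [J'] be a reduction properly inside the reduction
    [(s) + I_X] generated by a list [s ⊆ m].  Exchange the generators of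
    [s] one at a time for elements [c] of [J'] congruent to a unit multiple of
    them.  If every generator gets exchanged, [(s) + I_X ⊆ J'], which is
    impossible; otherwise [J' ⊆ (p) + m (q) + I_X] with [q] the non-exchanged
    generators, and then Nakayama's lemma shows that [(p) + I_X] is already a
    reduction with fewer generators.  Induction on the number of generators
    yields the minimal reduction.  The hypotheses of Nakayama's lemma hold
    since [O_{P^r,p}] is local and [m_{P^r,p}] is generated by the affine
    coordinates [x_i/x_j - p_i/p_j] of a chart containing [p]. *)

Lemma mem_subseq_insert (T : eqType) (a : T) (p q1 q2 : seq T) :
  {subset p ++ q1 ++ q2 <= p ++ q1 ++ a :: q2}.
Proof. by apply/mem_subseq/cat_subseq/cat_subseq/subseq_cons. Qed.

(* The ideal calculus of [Defs] is stated for the field [fracfield R r];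
   the same definitions over an arbitrary field. *)
Module FieldIdeals.
Section Calculus.
Variable F : fieldType.

Definition subI (A B : F -> Prop) : Prop := forall u, A u -> B u.
Definition eqI (A B : F -> Prop) : Prop := forall u, A u <-> B u.

Definition ideal_in (O A : F -> Prop) : Prop :=
  [/\ subI A O, A 0,
      (forall u v, A u -> A v -> A (u + v)) &
      (forall a u, O a -> A u -> A (a * u))].

Definition sumI (A B : F -> Prop) (u : F) : Prop :=
  exists a b, [/\ A a, B b & u = a + b].

Definition prodI (A B : F -> Prop) (u : F) : Prop :=
  exists (k : nat) (a b : 'I_k -> F),
    (forall i, A (a i) /\ B (b i)) /\ u = \sum_(i < k) a i * b i.

Fixpoint powI (O A : F -> Prop) (k : nat) : F -> Prop :=
  match k with
  | 0 => O
  | k'.+1 => prodI A (powI O A k')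
  end.

Definition genI (O : F -> Prop) (k : nat) (g : 'I_k -> F) (u : F) : Prop :=
  exists c : 'I_k -> F, (forall i, O (c i)) /\ u = \sum_(i < k) c i * g i.

End Calculus.
End FieldIdeals.

Section Reductions.
Import FieldIdeals.
Variable F : fieldType.
Variables (O mP IX : F -> Prop).
Local Notation mpow k := (powI O mP k).
Implicit Types (A B C N S T J : F -> Prop) (s p q G : seq F).

Definition Omodule (A : F -> Prop) : Prop :=
  [/\ A 0, (forall u v, A u -> A v -> A (u + v)) &
      (forall a u, O a -> A u -> A (a * u))].

Fixpoint span (C : F -> Prop) (s : seq F) (u : F) : Prop :=
  if s is g :: s' then exists2 c, C c & span C s' (u - c * g) else u = 0.

Definition fin_gen (A : F -> Prop) : Prop :=
  exists2 G, (forall g, g \in G -> A g) & subI A (span O G).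

Definition genX (s : seq F) : F -> Prop := sumI (span O s) IX.

(* With [O, mP, IX] the local ring, its maximal ideal and the ideal of [X],
   these unfold to [idealX_in_max], [reductionX] and [minimal_reductionX]. *)
Definition ideal_in_max (J : F -> Prop) : Prop :=
  [/\ ideal_in O J, subI IX J & subI J mP].

Definition reduction (J : F -> Prop) : Prop :=
  ideal_in_max J /\
  exists k, eqI (sumI (mpow k.+1) IX) (sumI (prodI J (mpow k)) IX).

Definition minimal_reduction (J : F -> Prop) : Prop :=
  reduction J /\ forall J', reduction J' -> subI J' J -> subI J J'.

Lemma Omodule_span C s : Omodule C -> Omodule (span C s).
Proof.
move=> [C0 CD CM]; elim: s => [|g s [S0 SD SM]] /=.
  by split=> [|u v -> ->|a u _ ->]; rewrite ?addr0 ?mulr0.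
split.
- by exists 0; rewrite // mul0r subr0.
- move=> u v [c Cc Su] [c' Cc' Sv]; exists (c + c'); first exact: CD.
  by have := SD _ _ Su Sv; congr span; ring.
- move=> a u Oa [c Cc Su]; exists (a * c); first exact: CM.
  by have := SM _ _ Oa Su; congr span; ring.
Qed.

Lemma span_mem C s g : Omodule C -> C 1 -> g \in s -> span C s g.
Proof.
move=> modC C1; have [C0 _ _] := modC.
elim: s => [//|h s IH] /=; rewrite inE => /predU1P [->|gs].
  by exists 1; rewrite // mul1r subrr; case: (Omodule_span s modC).
by exists 0; rewrite // mul0r subr0; apply: IH.
Qed.

Hypotheses (O0 : O 0) (O1 : O 1) (ON1 : O (-1))
  (OD : forall u v, O u -> O v -> O (u + v))
  (OM : forall u v, O u -> O v -> O (u * v)).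
Hypotheses (maxO : subI mP O) (max0 : mP 0)
  (maxD : forall u v, mP u -> mP v -> mP (u + v))
  (maxM : forall a u, O a -> mP u -> mP (a * u))
  (max_neq1 : ~ mP 1) (invO : forall u, O u -> ~ mP u -> O u^-1).
Hypotheses (IXmax : subI IX mP) (IX0 : IX 0)
  (IXD : forall u v, IX u -> IX v -> IX (u + v))
  (IXM : forall a u, O a -> IX u -> IX (a * u)).

Lemma OmoduleN A u : Omodule A -> A u -> A (- u).
Proof. by case=> _ _ AM Au; rewrite -mulN1r; apply: AM. Qed.

Lemma OmoduleB A u v : Omodule A -> A u -> A v -> A (u - v).
Proof. by move=> modA Au Av; case: (modA) => _ AD _; apply: AD (OmoduleN modA Av). Qed.

Lemma Omodule_ring : Omodule O. Proof. by split. Qed.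
Lemma Omodule_max : Omodule mP. Proof. by split. Qed.
Lemma Omodule_IX : Omodule IX. Proof. by split. Qed.

Lemma Omodule_mulr S b : Omodule S -> Omodule (fun y => S (y * b)).
Proof.
case=> S0 SD SM; split; first by rewrite mul0r.
- by move=> u v Su Sv; rewrite mulrDl; apply: SD.
- by move=> a u Oa Su; rewrite -mulrA; apply: SM.
Qed.

Lemma Omodule_sumI A B : Omodule A -> Omodule B -> Omodule (sumI A B).
Proof.
case=> A0 AD AM [B0 BD BM]; split.
- by exists 0, 0; rewrite addr0.
- move=> u v [a [b [Aa Bb ->]]] [a' [b' [Aa' Bb' ->]]].
  by exists (a + a'), (b + b'); split; [exact: AD | exact: BD | ring].
- move=> c u Oc [a [b [Aa Bb ->]]].
  by exists (c * a), (c * b); split; [exact: AM | exact: BM | ring].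
Qed.

Lemma sumI_subI A B T : Omodule T -> subI A T -> subI B T -> subI (sumI A B) T.
Proof. by case=> _ TD _ AT BT u [a [b [Aa Bb ->]]]; apply: TD; [apply: AT | apply: BT]. Qed.

Lemma sumIl A B u : Omodule B -> A u -> sumI A B u.
Proof. by case=> B0 _ _ Au; exists u, 0; rewrite addr0. Qed.

Lemma sumIr A B u : Omodule A -> B u -> sumI A B u.
Proof. by case=> A0 _ _ Bu; exists 0, u; rewrite add0r. Qed.

Lemma span_subI C s A : Omodule A -> subI C O -> (forall g, g \in s -> A g) ->
  subI (span C s) A.
Proof.
move=> [A0 AD AM] CO; elim: s => [|g s IH] sA u /=; first by move->.
move=> [c Cc Su]; rewrite -(subrK (c * g) u); apply: AD.
  by apply: IH Su => h hs; apply: sA; rewrite inE hs orbT.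
exact: AM (CO _ Cc) (sA _ (mem_head _ _)).
Qed.

Lemma span_subset s1 s2 : {subset s1 <= s2} -> subI (span O s1) (span O s2).
Proof.
move=> s12; apply: span_subI (Omodule_span _ Omodule_ring) (fun _ => id) _ => g /s12.
exact: span_mem Omodule_ring O1.
Qed.

Lemma span_catP p q z : span O (p ++ q) z ->
  exists v w, [/\ span O p v, span O q w & z = v + w].
Proof.
elim: p z => [|g p IH] z /=; first by move=> Sz; exists 0, z; rewrite add0r.
move=> [c Oc /IH [v [w [Sv Sw E]]]]; exists (v + c * g), w; split => //.
  by exists c; rewrite // addrK.
by rewrite -[z](subrK (c * g)) E; ring.
Qed.

Lemma span_cat p q v w : span O p v -> span O q w -> span O (p ++ q) (v + w).
Proof.
have [_ SD _] := Omodule_span (p ++ q) Omodule_ring.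
move=> Sv Sw; apply: SD.
  by apply: span_subset Sv => g gp; rewrite mem_cat gp.
by apply: span_subset Sw => g gq; rewrite mem_cat gq orbT.
Qed.

Lemma span_mul S GA GB a b : Omodule S ->
  (forall g h, g \in GA -> h \in GB -> S (g * h)) ->
  span O GA a -> span O GB b -> S (a * b).
Proof.
move=> modS GS Sa Sb.
apply: (span_subI (Omodule_mulr b modS) (fun _ => id) _ Sa) => g gA.
rewrite mulrC; apply: (span_subI (Omodule_mulr g modS) (fun _ => id) _ Sb) => h hB.
by rewrite mulrC; apply: GS.
Qed.

Lemma max_mul_span G a c : mP a -> span O G c -> span mP G (a * c).
Proof.
move=> max_a; elim: G c => [|g G IH] c /=; first by move->; rewrite mulr0.
move=> [d Od Sc]; exists (a * d); first by rewrite mulrC; apply: maxM.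
by have := IH _ Sc; congr span; ring.
Qed.

Lemma prodI_subI A B T : T 0 -> (forall u v, T u -> T v -> T (u + v)) ->
  (forall a b, A a -> B b -> T (a * b)) -> subI (prodI A B) T.
Proof.
move=> T0 TD ABT u [k [a [b [AB ->]]]]; apply: big_ind => // i _.
by case: (AB i) => *; apply: ABT.
Qed.

Lemma prodI_mul A B a b : A a -> B b -> prodI A B (a * b).
Proof.
by move=> Aa Bb; exists 1%N, (fun _ => a), (fun _ => b); split => //; rewrite big_ord1.
Qed.

Lemma Omodule_prodI A B : (forall c a, O c -> A a -> A (c * a)) -> Omodule (prodI A B).
Proof.
move=> AM; split.
- by exists 0%N, (fun _ => 0), (fun _ => 0); split; [case | rewrite big_ord0].
- move=> u v [k [a [b [AB ->]]]] [k' [a' [b' [AB' ->]]]].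
  exists (k + k')%N, (fun i => match split i with inl i => a i | inr i => a' i end),
    (fun i => match split i with inl i => b i | inr i => b' i end).
  split; first by move=> i; case: (split i) => i'; [exact: AB | exact: AB'].
  rewrite big_split_ord /=; congr (_ + _); apply: eq_bigr => i _.
    by have := unsplitK (inl i : 'I_k + 'I_k'); rewrite /= => ->.
  by have := unsplitK (inr i : 'I_k + 'I_k'); rewrite /= => ->.
- move=> c u Oc [k [a [b [AB ->]]]]; exists k, (fun i => c * a i), b; split.
    by move=> i; case: (AB i) => Aa Bb; split => //; apply: AM.
  by rewrite mulr_sumr; apply: eq_bigr => i _; rewrite mulrA.
Qed.

Lemma prodI_monol A A' B : subI A A' -> subI (prodI A B) (prodI A' B).
Proof.
move=> AA' u [k [a [b [AB ->]]]]; exists k, a, b; split => // i.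
by case: (AB i) => *; split => //; apply: AA'.
Qed.

Lemma prodI_monor A B B' : subI B B' -> subI (prodI A B) (prodI A B').
Proof.
move=> BB' u [k [a [b [AB ->]]]]; exists k, a, b; split => // i.
by case: (AB i) => *; split => //; apply: BB'.
Qed.

Lemma powI_sub_ring k : subI (mpow k) O.
Proof.
elim: k => [|k IH] //=; apply: prodI_subI => // a b max_a Ob.
exact: OM (maxO max_a) (IH _ Ob).
Qed.

Lemma Omodule_powI k : Omodule (mpow k).
Proof. by case: k => [|k] /=; [exact: Omodule_ring | apply: Omodule_prodI]. Qed.

Lemma powI_succ k : subI (mpow k.+1) (mpow k).
Proof.
elim: k => [|k IH] /=; last exact: prodI_monor.
by apply: prodI_subI => // a b max_a Ob; apply: OM => //; apply: maxO.
Qed.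

Lemma powI_le i j : (j <= i)%N -> subI (mpow i) (mpow j).
Proof.
move=> /subnK <-; elim: (i - j)%N => [|d IH] u; first by rewrite add0n.
by rewrite addSn => /powI_succ /IH.
Qed.

Lemma span_max_mul_powI q w b k : (forall v, v \in q -> mP v) ->
  span mP q w -> mpow k b -> mpow k.+2 (w * b).
Proof.
have [P0 PD _] := Omodule_powI k.+2.
elim: q w => [|g q IH] w q_max /=; first by move=> -> _; rewrite mul0r.
move=> [mu max_mu Sw] Pb; rewrite -(subrK (mu * g) w) mulrDl; apply: PD.
  by apply: IH => // v vq; apply: q_max; rewrite inE vq orbT.
rewrite mulrAC mulrC; apply: prodI_mul; first by apply: q_max; exact: mem_head.
exact: prodI_mul.
Qed.

Lemma nakayama N G : Omodule N ->
  (forall g, g \in G -> sumI N (span mP G) g) -> forall g, g \in G -> N g.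
Proof.
move=> modN; have [N0 ND NM] := modN; elim: G => [//|a G IH] cover.
have [n [w [Nn [mu max_mu Sw] Ea]]] := cover a (mem_head a G).
set w' := w - mu * a in Sw.
have unit_mu : O (1 - mu)^-1.
  apply: invO; first exact: (OmoduleB Omodule_ring O1 (maxO max_mu)).
  by move=> max_mu'; apply: max_neq1; rewrite -(subrK mu 1); apply: maxD.
have mu_neq1 : 1 - mu != 0.
  by apply/negP; rewrite subr_eq0 => /eqP mu1; apply: max_neq1; rewrite mu1.
have {}Ea : a = (1 - mu)^-1 * n + (1 - mu)^-1 * w'.
  have Ea' : (1 - mu) * a = n + w' by rewrite /w' mulrBl mul1r {1}Ea; ring.
  by rewrite -mulrDr -Ea' mulKf.
have NG : forall g, g \in G -> N g.
  apply: IH => g gG; have gaG : g \in a :: G by rewrite inE gG orbT.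
  have [ng [wg [Nng [mug max_mug Swg] ->]]] := cover g gaG.
  have Omug : O (mug * (1 - mu)^-1) by apply: OM; [apply: maxO | ].
  exists (ng + mug * (1 - mu)^-1 * n), (wg - mug * a + mug * (1 - mu)^-1 * w').
  split; first by apply: ND => //; apply: NM.
    have [_ SD SM] := Omodule_span G Omodule_max.
    by apply: SD => //; apply: SM.
  by rewrite [X in wg - mug * X]Ea; ring.
move=> g; rewrite inE => /predU1P [->|]; last exact: NG.
by rewrite Ea; apply: ND; apply: NM => //; exact: (span_subI modN maxO NG).
Qed.

Lemma fin_gen_prodI A B : fin_gen A -> fin_gen B -> fin_gen (prodI A B).
Proof.
move=> [GA GA_A A_GA] [GB GB_B B_GB]; exists [seq g * h | g <- GA, h <- GB].
  move=> z /allpairsP [[g h] [/= gA hB ->]].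
  by apply: prodI_mul; [apply: GA_A | apply: GB_B].
have [S0 SD _] := Omodule_span [seq g * h | g <- GA, h <- GB] Omodule_ring.
apply: prodI_subI => // a b Aa Bb.
apply: (span_mul (Omodule_span _ Omodule_ring)) (A_GA _ Aa) (B_GB _ Bb) => g h gA hB.
by apply: span_mem Omodule_ring O1 _; apply: allpairs_f.
Qed.

Lemma fin_gen_ring : fin_gen O.
Proof.
exists [:: 1]; first by move=> g; rewrite inE => /eqP ->.
by move=> u Ou /=; exists u; rewrite // mulr1 subrr.
Qed.

Hypothesis max_fin_gen : fin_gen mP.

Lemma fin_gen_powI k : fin_gen (mpow k).
Proof. by elim: k => [|k IH] /=; [exact: fin_gen_ring | exact: fin_gen_prodI]. Qed.

Lemma Omodule_genX s : Omodule (genX s).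
Proof. exact: Omodule_sumI (Omodule_span _ Omodule_ring) Omodule_IX. Qed.

Lemma genX_mem s g : g \in s -> genX s g.
Proof. by move=> gs; apply: sumIl Omodule_IX _; apply: span_mem Omodule_ring O1 gs. Qed.

Lemma genX_subI s1 s2 : (forall g, g \in s1 -> genX s2 g) -> subI (genX s1) (genX s2).
Proof.
move=> s12; apply: sumI_subI (Omodule_genX s2) _ _.
  exact: span_subI (Omodule_genX s2) (fun _ => id) s12.
by move=> u IXu; apply: sumIr (Omodule_span _ Omodule_ring) IXu.
Qed.

Lemma ideal_in_max_genX p : (forall v, v \in p -> mP v) -> ideal_in_max (genX p).
Proof.
move=> p_max; have [X0 XD XM] := Omodule_genX p.
have p_span_max : subI (span O p) mP by apply: span_subI Omodule_max (fun _ => id) p_max.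
split; last exact: sumI_subI Omodule_max p_span_max IXmax.
  split=> //; apply: sumI_subI Omodule_ring _ _ => u.
    by move=> /p_span_max /maxO.
  by move=> /IXmax /maxO.
by move=> u IXu; apply: sumIr (Omodule_span _ Omodule_ring) IXu.
Qed.

Lemma reduction_eqI J J' : eqI J J' -> reduction J -> reduction J'.
Proof.
move=> JJ' [[[JO J0 JD JM] IXJ Jmax] [k redJ]]; split.
  split; first split.
  - by move=> u /JJ' /JO.
  - exact/JJ'.
  - by move=> u v /JJ' Ju /JJ' Jv; apply/JJ'; apply: JD.
  - by move=> a u Oa /JJ' Ju; apply/JJ'; apply: JM.
  - by move=> u /IXJ /JJ'.
  - by move=> u /JJ' /Jmax.
exists k => u; rewrite redJ; split; case=> [a [b [Aa Bb ->]]]; exists a, b.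
  by split => //; apply: prodI_monol Aa => v /JJ'.
by split => //; apply: prodI_monol Aa => v /JJ'.
Qed.

Lemma prodI_genX_powI_sub p k : (forall v, v \in p -> mP v) ->
  subI (sumI (prodI (genX p) (mpow k)) IX) (sumI (mpow k.+1) IX).
Proof.
move=> p_max; have modT := Omodule_sumI (Omodule_powI k.+1) Omodule_IX.
have [T0 TD _] := modT.
apply: sumI_subI modT _ (fun i => sumIr (Omodule_powI _)).
apply: prodI_subI => // a b [v [i [Sv IXi ->]]] Pb; rewrite mulrDl; apply: TD.
  apply: sumIl Omodule_IX _; apply: prodI_mul Pb.
  exact: span_subI Omodule_max (fun _ => id) p_max _ Sv.
by apply: sumIr (Omodule_powI _) _; rewrite mulrC; apply: IXM (powI_sub_ring Pb) IXi.
Qed.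

(* A reduction [J] lying in [(p) + m (q) + I_X] forces [(p) + I_X] to be one:
   modulo [(p) m^k + I_X], the generators of [m^(k+1)] lie in [m^(k+2)], so
   Nakayama applies. *)
Lemma powI_sub_prodI_genX J p q k :
  (forall v, v \in p -> mP v) -> (forall v, v \in q -> mP v) ->
  subI J (sumI (span O p) (sumI (span mP q) IX)) ->
  subI (mpow k.+1) (sumI (prodI J (mpow k)) IX) ->
  subI (mpow k.+1) (sumI (prodI (genX p) (mpow k)) IX).
Proof.
move=> p_max q_max J_cover redJ.
have modP : Omodule (prodI (genX p) (mpow k)) by apply: Omodule_prodI; case: (Omodule_genX p).
set N := sumI _ IX; have modN : Omodule N by apply: Omodule_sumI modP Omodule_IX.
have [G G_P P_G] := fin_gen_powI k.+1.
have modT : Omodule (sumI N (span mP G)) by apply: Omodule_sumI modN (Omodule_span _ Omodule_max).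
have [T0 TD _] := modT.
have NG : forall g, g \in G -> N g.
  apply: (nakayama modN) => g gG; apply: sumI_subI modT _ _ _ (redJ _ (G_P _ gG)).
    apply: prodI_subI => // c b Jc Pb.
    have [v [wi [Sv [w [i [Sw IXi ->]]] ->]]] := J_cover c Jc.
    rewrite !mulrDl; apply: (TD); last apply: (TD).
    - apply: sumIl (Omodule_span _ Omodule_max) _; apply: sumIl Omodule_IX _.
      by apply: prodI_mul Pb; apply: sumIl Omodule_IX Sv.
    - apply: sumIr modN _; move: (span_max_mul_powI q_max Sw Pb) => /=.
      apply: prodI_subI; try by case: (Omodule_span G Omodule_max).
      by move=> a c' max_a Pc'; apply: max_mul_span max_a (P_G _ Pc').
    - apply: sumIl (Omodule_span _ Omodule_max) _; apply: sumIr modP _.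
      by rewrite mulrC; apply: IXM (powI_sub_ring Pb) IXi.
  by move=> i IXi; apply: sumIl (Omodule_span _ Omodule_max) _; apply: sumIr modP _.
by move=> z /P_G Sz; apply: span_subI modN (fun _ => id) NG _ Sz.
Qed.

Lemma reduction_genX_of_cover J p q : reduction J ->
  (forall v, v \in p -> mP v) -> (forall v, v \in q -> mP v) ->
  subI J (sumI (span O p) (sumI (span mP q) IX)) -> reduction (genX p).
Proof.
move=> [_ [k redJ]] p_max q_max J_cover; split; first exact: ideal_in_max_genX.
exists k => u; split; last exact: prodI_genX_powI_sub.
have modP : Omodule (prodI (genX p) (mpow k)) by apply: Omodule_prodI; case: (Omodule_genX p).
apply: sumI_subI (Omodule_sumI modP Omodule_IX) _ (fun i => sumIr modP) u.
apply: powI_sub_prodI_genX p_max q_max J_cover _ => v Pv.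
by apply/redJ; apply: sumIl Omodule_IX Pv.
Qed.

Lemma span_max_or_unit_coef q w : span O q w ->
  (exists q1 a q2 c, [/\ q = q1 ++ a :: q2, O c, ~ mP c & span O (q1 ++ q2) (w - c * a)])
  \/ span mP q w.
Proof.
elim: q w => [|a q IH] w /=; first by right.
move=> [c Oc Sw]; case: (classic (mP c)) => max_c; last by left; exists [::], a, q, c.
case: (IH _ Sw) => [[q1 [b [q2 [c' [-> Oc' not_max_c' Sw']]]]] | Sw']; last by right; exists c.
left; exists (a :: q1), b, q2, c'; split => //.
by exists c => //; move: Sw'; congr span; ring.
Qed.

Lemma genX_exchange p q1 a q2 c u : O u -> ~ mP u ->
  genX (p ++ q1 ++ a :: q2) c -> genX (p ++ q1 ++ q2) (c - u * a) ->
  eqI (genX (c :: p ++ q1 ++ q2)) (genX (p ++ q1 ++ a :: q2)).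
Proof.
move=> Ou not_max_u Xc Xca z; split; apply: genX_subI => g.
  by rewrite inE => /predU1P [-> //|/(mem_subseq_insert a) /genX_mem].
have rest_X : subI (genX (p ++ q1 ++ q2)) (genX (c :: p ++ q1 ++ q2)).
  by apply: genX_subI => h hs; apply: genX_mem; rewrite inE hs orbT.
rewrite !mem_cat inE; case/or4P => [gs|gs|/eqP ->|gs].
- by apply: rest_X; apply: genX_mem; rewrite !mem_cat gs.
- by apply: rest_X; apply: genX_mem; rewrite !mem_cat gs orbT.
- have u_neq0 : u != 0 by apply: contraPneq not_max_u => ->.
  have -> : a = u^-1 * (c - (c - u * a)) by rewrite opprB addrC subrK mulKf.
  have [_ _ XM] := Omodule_genX (c :: p ++ q1 ++ q2).
  apply: XM; first exact: invO.
  by apply: OmoduleB (Omodule_genX _) (genX_mem (mem_head _ _)) (rest_X _ Xca).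
- by apply: rest_X; apply: genX_mem; rewrite !mem_cat gs !orbT.
Qed.

Definition exchangeable J p q : Prop :=
  exists c q1 a q2 u, [/\ J c, q = q1 ++ a :: q2, O u, ~ mP u &
    genX (p ++ q1 ++ q2) (c - u * a)].

Lemma cover_of_not_exchangeable J p q : subI J (genX (p ++ q)) -> ~ exchangeable J p q ->
  subI J (sumI (span O p) (sumI (span mP q) IX)).
Proof.
move=> J_X no_exchange c Jc.
have [z [i [Sz IXi Ec]]] := J_X c Jc; have [v [w [Sv Sw Ez]]] := span_catP Sz.
rewrite Ec Ez in Jc *.
case: (span_max_or_unit_coef Sw) => [[q1 [a [q2 [u [Eq Ou not_max_u Swa]]]]] | Sw'].
  exfalso; apply: no_exchange; exists (v + w + i), q1, a, q2, u; split => //.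
  rewrite /genX; exists (v + (w - u * a)), i; split; [exact: span_cat | done | ring].
exists v, (w + i); split => //; last by rewrite addrA.
by exists w, i.
Qed.

(* [p] holds the generators already exchanged for elements of [J], [q] the
   remaining ones. *)
Lemma exchange J : reduction J -> forall n p q, size q = n ->
  (forall v, v \in p -> J v) -> subI J (genX (p ++ q)) ->
  (forall v, v \in p ++ q -> mP v) ->
  subI (genX (p ++ q)) J \/
  exists s, [/\ (size s < size (p ++ q))%N, reduction (genX s) & subI (genX s) (genX (p ++ q))].
Proof.
move=> redJ; have [[[_ J0 JD JM] IXJ Jmax] _] := redJ.
elim=> [|n IH] p q size_q pJ J_X s_max.
  move/eqP: size_q; rewrite size_eq0 => /eqP ->; rewrite cats0; left.
  have modJ : Omodule J by split.
  exact: sumI_subI modJ (span_subI modJ (fun _ => id) pJ) IXJ.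
case: (classic (exchangeable J p q)) => [|no_exchange].
  move=> [c [q1 [a [q2 [u [Jc Eq Ou not_max_u Xca]]]]]]; subst q.
  have E := genX_exchange Ou not_max_u (J_X _ Jc) Xca.
  case: (IH (c :: p) (q1 ++ q2)).
  - by move: size_q; rewrite !size_cat /=; lia.
  - by move=> v; rewrite inE => /predU1P [->|/pJ].
  - by move=> v /J_X /E.
  - by move=> v; rewrite inE => /predU1P [->|/mem_subseq_insert /s_max]; first exact: Jmax.
  - by move=> sJ; left => v /E /sJ.
  - move=> [s [size_s red_s sX]]; right; exists s; split => //.
      by move: size_s; rewrite /= !size_cat /=; lia.
    by move=> v /sX /E.
right; exists p; split.
- by rewrite size_cat size_q addnS ltnS leq_addr.
- apply: reduction_genX_of_cover redJ _ _ (cover_of_not_exchangeable J_X no_exchange).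
    by move=> v vp; apply: s_max; rewrite mem_cat vp.
  by move=> v vq; apply: s_max; rewrite mem_cat vq orbT.
- by apply: genX_subI => g gp; apply: genX_mem; rewrite mem_cat gp.
Qed.

Lemma reduction_genX_shrink s : reduction (genX s) -> ~ minimal_reduction (genX s) ->
  exists s', [/\ (size s' < size s)%N, reduction (genX s') & subI (genX s') (genX s)].
Proof.
move=> red_s not_min.
have [J [redJ J_s not_s_J]] : exists J, [/\ reduction J, subI J (genX s) & ~ subI (genX s) J].
  apply: NNPP => none; apply: not_min; split => // J redJ J_s.
  by apply: NNPP => not_s_J; apply: none; exists J.
have s_max v : v \in s -> mP v.
  by move=> vs; case: red_s => -[_ _ X_max] _; apply: X_max; apply: genX_mem.
by case: (exchange redJ (erefl (size s)) (p := [::]) _ J_s s_max).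
Qed.

Lemma minimal_reduction_sub_genX s : reduction (genX s) ->
  exists J, minimal_reduction J /\ subI J (genX s).
Proof.
move=> red_s; have [n] := ubnP (size s); elim: n s red_s => // n IH s red_s size_s.
case: (classic (minimal_reduction (genX s))) => [min_s | not_min].
  by exists (genX s); split=> // u.
have [s' [lt_s' red_s' s'_s]] := reduction_genX_shrink red_s not_min.
have [J [minJ J_s']] := IH s' red_s' (leq_trans lt_s' size_s).
by exists J; split => // u /J_s' /s'_s.
Qed.

Lemma Omodule_genI k (g : 'I_k -> F) : Omodule (genI O g).
Proof.
split.
- by exists (fun _ => 0); split => //; rewrite big1 // => i _; rewrite mul0r.
- move=> u v [c [Oc ->]] [c' [Oc' ->]]; exists (fun i => c i + c' i); split.
    by move=> i; apply: OD.
  by rewrite -big_split; apply: eq_bigr => i _; rewrite mulrDl.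
- move=> a u Oa [c [Oc ->]]; exists (fun i => a * c i); split.
    by move=> i; apply: OM.
  by rewrite mulr_sumr; apply: eq_bigr => i _; rewrite mulrA.
Qed.

Lemma span_genI k (g : 'I_k -> F) : eqI (span O [seq g i | i <- enum 'I_k]) (genI O g).
Proof.
move=> u; split.
  apply: span_subI (Omodule_genI g) (fun _ => id) _ u => z /mapP [i _ ->].
  exists (fun l => if l == i then 1 else 0); split; first by move=> l; case: ifP.
  rewrite (bigD1 i) //= eqxx mul1r big1 ?addr0 // => l /negbTE ->.
  by rewrite mul0r.
move=> [c [Oc ->]]; have [S0 SD SM] := Omodule_span [seq g i | i <- enum 'I_k] Omodule_ring.
apply: big_ind => // i _; apply: SM => //; apply: span_mem Omodule_ring O1 _.
by rewrite map_f // mem_enum.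
Qed.

Lemma genX_genI k (g : 'I_k -> F) :
  eqI (genX [seq g i | i <- enum 'I_k]) (sumI (genI O g) IX).
Proof. by move=> u; split => -[a [b [Aa Bb ->]]]; exists a, b; split => //; apply/span_genI. Qed.

Lemma reduction_loewy_bound k (g : 'I_k -> F) m :
  reduction (sumI (genI O g) IX) -> (0 < m)%N ->
  (forall J, minimal_reduction J -> subI (mpow m) J) ->
  forall i, ~ subI (mpow i) (sumI (genI O g) IX) -> (i <= m.-1)%N.
Proof.
move=> red_g m_gt0 min_sub i not_sub; rewrite leqNgt; apply/negP => lt_m_i.
have red_s := reduction_eqI (fun u => iff_sym (genX_genI g u)) red_g.
have [J [minJ J_s]] := minimal_reduction_sub_genX red_s.
have le_m_i : (m <= i)%N by rewrite -(prednK m_gt0).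
by apply: not_sub => u /(powI_le le_m_i) /(min_sub _ minJ) /J_s /genX_genI.
Qed.

End Reductions.

Lemma mmap_dhomog (K : nzRingType) (S : comNzRingType) n (f : K -> S) (h : 'I_n -> S)
    (lam : S) d (p : {mpoly K[n]}) :
  p \is d.-homog -> mmap f (fun i => h i * lam) p = mmap f h p * lam ^+ d.
Proof.
move=> p_homog; rewrite /mmap mulr_suml; apply: eq_big_seq => m m_supp.
rewrite /mmap1 (eq_bigr (fun i => h i ^+ m i * lam ^+ m i)); last by move=> i _; rewrite exprMn.
by rewrite big_split /= prodrXr -mdegE (dhomog_mf p_homog m_supp) mulrA.
Qed.

Section LocalRing.
Import FieldIdeals.
Variables (K : fieldType) (n : nat) (Fr : fieldType) (tf : {rmorphism {mpoly K[n]} -> Fr}).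
Hypothesis tf_inj : injective tf.
Variable x : 'I_n -> K.
Implicit Types (f g : {mpoly K[n]}) (u v : Fr).

(* With [tf := tofrac], [frac_ring x], [frac_max x] and [frac_ideal I x]
   are [loc_ring x], [loc_max x] and [loc_ideal_of I x]. *)
Definition frac_ring u : Prop :=
  exists (d : nat) f g, [/\ f \is d.-homog, g \is d.-homog, g.@[x] != 0 & u = tf f / tf g].

Definition frac_with (P : {mpoly K[n]} -> Prop) u : Prop :=
  exists (d : nat) f g,
    [/\ f \is d.-homog, g \is d.-homog, g.@[x] != 0, P f & u = tf f / tf g].

Definition frac_max : Fr -> Prop := frac_with (fun f => f.@[x] = 0).
Definition frac_ideal (I : pred {mpoly K[n]}) : Fr -> Prop := frac_with (fun f => f \in I).

Lemma tf_neq0 g : g.@[x] != 0 -> tf g != 0.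
Proof.
apply: contraNneq => tf_g0; have -> : g = 0 by apply: tf_inj; rewrite tf_g0 rmorph0.
by rewrite meval0.
Qed.

Lemma dhomog_mpolyC (c : K) : (c%:MP : {mpoly K[n]}) \is 0.-homog.
Proof. by rewrite -[c%:MP]mulr1 mul_mpolyC; apply: dhomogZ; apply: dhomog1. Qed.

Lemma dhomog_mpolyX i : ('X_i : {mpoly K[n]}) \is 1.-homog.
Proof. by rewrite dhomogX; apply/eqP; apply: mdeg1. Qed.

Lemma frac_ringP u : frac_ring u <-> frac_with (fun _ => True) u.
Proof.
split=> [[d [f [g [hf hg gx ->]]]] | [d [f [g [hf hg gx _ ->]]]]].
  by exists d, f, g.
by exists d, f, g.
Qed.

Lemma frac_with0 P : P 0 -> frac_with P 0.
Proof.
move=> P0; exists 0%N, 0, 1; split; rewrite ?dhomog0 ?dhomog1 //.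
  by rewrite meval1 oner_neq0.
by rewrite rmorph0 mul0r.
Qed.

Lemma frac_withD (P : {mpoly K[n]} -> Prop) :
  (forall f f' g g', P f -> P f' -> P (f * g' + f' * g)) ->
  forall u v, frac_with P u -> frac_with P v -> frac_with P (u + v).
Proof.
move=> PD u v [d [f [g [hf hg gx Pf ->]]]] [e [f' [g' [hf' hg' gx' Pf' ->]]]].
exists (d + e)%N, (f * g' + f' * g), (g * g'); split.
- by apply: dhomogD; [apply: dhomogM | rewrite addnC; apply: dhomogM].
- exact: dhomogM.
- by rewrite mevalM mulf_neq0.
- exact: PD.
- rewrite rmorphD !rmorphM; have g0 := tf_neq0 gx; have g0' := tf_neq0 gx'.
  by field; rewrite g0 g0'.
Qed.

Lemma frac_withM (P : {mpoly K[n]} -> Prop) :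
  (forall f f', P f' -> P (f * f')) ->
  forall a u, frac_ring a -> frac_with P u -> frac_with P (a * u).
Proof.
move=> PM a u [d [f [g [hf hg gx ->]]]] [e [f' [g' [hf' hg' gx' Pf' ->]]]].
exists (d + e)%N, (f * f'), (g * g'); split; rewrite ?dhomogM ?mevalM ?mulf_neq0 //.
  exact: PM.
by rewrite !rmorphM invfM mulrACA.
Qed.

Lemma frac_ring0 : frac_ring 0.
Proof. exact/frac_ringP/frac_with0. Qed.

Lemma frac_ring1 : frac_ring 1.
Proof. by exists 0%N, 1, 1; rewrite dhomog1 meval1 oner_neq0 rmorph1 divr1. Qed.

Lemma frac_ringN1 : frac_ring (-1).
Proof.
exists 0%N, (-1), 1; rewrite dhomogN dhomog1 meval1 oner_neq0 rmorph1 divr1.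
by rewrite rmorphN rmorph1.
Qed.

Lemma frac_ringD u v : frac_ring u -> frac_ring v -> frac_ring (u + v).
Proof. by move=> /frac_ringP Ou /frac_ringP Ov; apply/frac_ringP; apply: frac_withD Ou Ov. Qed.

Lemma frac_ringM u v : frac_ring u -> frac_ring v -> frac_ring (u * v).
Proof. by move=> Ou /frac_ringP Ov; apply/frac_ringP; apply: frac_withM Ou Ov. Qed.

Lemma frac_max_sub_ring : subI frac_max frac_ring.
Proof. by move=> u [d [f [g [hf hg gx _ ->]]]]; exists d, f, g. Qed.

Lemma frac_max0 : frac_max 0.
Proof. by apply: frac_with0; rewrite meval0. Qed.

Lemma frac_maxD u v : frac_max u -> frac_max v -> frac_max (u + v).
Proof. by apply: frac_withD => f f' g g' fx f'x; rewrite mevalD !mevalM fx f'x !mul0r addr0. Qed.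

Lemma frac_maxM a u : frac_ring a -> frac_max u -> frac_max (a * u).
Proof. by apply: frac_withM => f f' f'x; rewrite mevalM f'x mulr0. Qed.

Lemma frac_max_neq1 : ~ frac_max 1.
Proof.
move=> [d [f [g [_ _ gx fx E]]]].
have fg : f = g by apply: tf_inj; rewrite -[tf f](mulfVK (tf_neq0 gx)) -E mul1r.
by move: gx; rewrite -fg fx eqxx.
Qed.

Lemma frac_ring_inv u : frac_ring u -> ~ frac_max u -> frac_ring u^-1.
Proof.
move=> [d [f [g [hf hg gx ->]]]] not_max.
have fx : f.@[x] != 0 by apply/eqP => fx; apply: not_max; exists d, f, g.
by exists d, g, f; rewrite invf_div.
Qed.

Variable j : 'I_n.
Hypothesis xj_neq0 : x j != 0.

Local Notation const := (tf \o @mpolyC n K).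

Definition chart_coord i : Fr := tf 'X_i / tf 'X_j.
Definition point_coord i : K := x i / x j.
Definition chart_diff i : Fr := chart_coord i - const (point_coord i).
Definition chart_diffs : seq Fr := [seq chart_diff i | i <- enum 'I_n].

Lemma tf_Xj_neq0 : tf 'X_j != 0.
Proof. by apply: tf_neq0; rewrite mevalXU. Qed.

Lemma chart_diff_max i : frac_max (chart_diff i).
Proof.
exists 1%N, ((x j)%:MP * 'X_i - (x i)%:MP * 'X_j), ((x j)%:MP * 'X_j); split.
- have cX_homog c k : ((c%:MP : {mpoly K[n]}) * 'X_k) \is 1.-homog.
    by have := dhomogM (dhomog_mpolyC c) (dhomog_mpolyX k).
  by apply: dhomogD; rewrite ?dhomogN cX_homog.
- by have := dhomogM (dhomog_mpolyC (x j)) (dhomog_mpolyX j).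
- by rewrite mevalM mevalC mevalXU mulf_neq0.
- by rewrite mevalB !mevalM !mevalC !mevalXU mulrC subrr.
- have xj0 : const (x j) != 0 by apply: tf_neq0; rewrite mevalC.
  rewrite /chart_diff /chart_coord /point_coord !rmorphM rmorphB !rmorphM fmorphV /=.
  by field; rewrite tf_Xj_neq0 xj0.
Qed.

Lemma const_frac_ring c : frac_ring (const c).
Proof.
exists 0%N, c%:MP, 1; rewrite dhomog_mpolyC dhomog1 meval1 oner_neq0.
by rewrite rmorph1 divr1.
Qed.

Lemma chart_coord_frac_ring i : frac_ring (chart_coord i).
Proof. by exists 1%N, 'X_i, 'X_j; rewrite !dhomog_mpolyX mevalXU. Qed.

Lemma Omodule_frac_ring : Omodule frac_ring frac_ring.
Proof. by split; [exact: frac_ring0 | exact: frac_ringD | exact: frac_ringM]. Qed.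

Definition chart_congr (a b : Fr) : Prop :=
  [/\ frac_ring a, frac_ring b & span frac_ring chart_diffs (a - b)].

Lemma chart_congrM a1 b1 a2 b2 :
  chart_congr a1 b1 -> chart_congr a2 b2 -> chart_congr (a1 * a2) (b1 * b2).
Proof.
move=> [Oa1 Ob1 S1] [Oa2 Ob2 S2]; split; [exact: frac_ringM | exact: frac_ringM |].
have [_ SD SM] := Omodule_span chart_diffs Omodule_frac_ring.
have -> : a1 * a2 - b1 * b2 = a1 * (a2 - b2) + b2 * (a1 - b1) by ring.
by apply: SD; apply: SM.
Qed.

Lemma chart_congr1 : chart_congr 1 1.
Proof.
split; [exact: frac_ring1 | exact: frac_ring1 | rewrite subrr].
by case: (Omodule_span chart_diffs Omodule_frac_ring).
Qed.

Lemma chart_congr_coord i : chart_congr (chart_coord i) (const (point_coord i)).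
Proof.
split; [exact: chart_coord_frac_ring | exact: const_frac_ring |].
by apply: (span_mem Omodule_frac_ring frac_ring1); apply: (map_f chart_diff); rewrite mem_enum.
Qed.

Lemma chart_congr_mmap p :
  span frac_ring chart_diffs (mmap const chart_coord p - const p.@[point_coord]).
Proof.
have [S0 SD SM] := Omodule_span chart_diffs Omodule_frac_ring.
elim/mpolyind: p => [|c m p _ _ IH]; first by rewrite mmap0 meval0 rmorph0 subrr.
rewrite mmapD mmapZ mmapX mevalD mevalZ mevalX rmorphD rmorphM rmorph_prod.
rewrite (eq_bigr (fun i => const (point_coord i) ^+ m i)); last by move=> i _; rewrite rmorphXn.
set P1 := mmap1 _ m; set P2 := \prod_(i < n) _.
have [_ _ S12] : chart_congr P1 P2.
  apply: (big_ind2 chart_congr chart_congr1 chart_congrM) => i _.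
  elim: (m i) => [|e IHe]; first by rewrite !expr0; apply: chart_congr1.
  by rewrite !exprS; apply: chart_congrM IHe; apply: chart_congr_coord.
rewrite (_ : _ - _ = const c * (P1 - P2) + (mmap const chart_coord p - const p.@[point_coord])).
  by apply: SD => //; apply: SM; [exact: const_frac_ring |].
by ring.
Qed.

Lemma mmap_tf f : mmap const (fun i => tf 'X_i) f = tf f.
Proof.
rewrite [in RHS](mpolyE f) rmorph_sum /mmap; apply: eq_bigr => m _.
rewrite -mul_mpolyC rmorphM mpolyXE_id rmorph_prod /mmap1; congr (_ * _).
by apply: eq_bigr => i _; rewrite rmorphXn.
Qed.

(* Dehomogenise: [f/g = (X_j^d/g) f(X/X_j)], and [f(X/X_j) = f(x/x_j) = 0]
   modulo the chart differences. *)
Lemma frac_max_span u : frac_max u -> span frac_ring chart_diffs u.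
Proof.
move=> [d [f [g [hf hg gx fx ->]]]].
have [_ _ SM] := Omodule_span chart_diffs Omodule_frac_ring.
have dehomog : mmap const chart_coord f = tf f * (tf 'X_j)^-1 ^+ d.
  by rewrite (mmap_dhomog const (fun i => tf 'X_i) _ hf) mmap_tf.
have f_point : f.@[point_coord] = 0.
  transitivity (f.@[x] * (x j)^-1 ^+ d); first exact: (mmap_dhomog idfun x _ hf).
  by rewrite fx mul0r.
have := chart_congr_mmap f; rewrite f_point rmorph0 subr0 dehomog => Sf.
rewrite (_ : _ / _ = tf ('X_j ^+ d) / tf g * (tf f * (tf 'X_j)^-1 ^+ d)); last first.
  have g0 := tf_neq0 gx; rewrite rmorphXn exprVn.
  by field; rewrite g0 expf_neq0 // tf_Xj_neq0.
apply: SM => //; exists d, ('X_j ^+ d), g; split => //.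
by have := dhomogMn d (dhomog_mpolyX j); rewrite mul1n.
Qed.

Lemma fin_gen_frac_max : fin_gen frac_ring frac_max.
Proof.
exists chart_diffs; last exact: frac_max_span.
by move=> g /mapP [i _ ->]; exact: chart_diff_max.
Qed.

Section Ideal.
Variable I : pred {mpoly K[n]}.
Hypotheses (I0 : 0 \in I) (ID : forall f g, f \in I -> g \in I -> f + g \in I)
  (IM : forall a f, f \in I -> a * f \in I) (I_vanish : forall f, f \in I -> f.@[x] = 0).

Lemma frac_ideal_sub_max : subI (frac_ideal I) frac_max.
Proof. by move=> u [d [f [g [hf hg gx If ->]]]]; exists d, f, g; split=> //; apply: I_vanish. Qed.

Lemma frac_ideal0 : frac_ideal I 0.
Proof. exact: frac_with0. Qed.

Lemma frac_idealD u v : frac_ideal I u -> frac_ideal I v -> frac_ideal I (u + v).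
Proof. by apply: frac_withD => f f' g g' If If'; apply: ID; rewrite mulrC; apply: IM. Qed.

Lemma frac_idealM a u : frac_ring a -> frac_ideal I u -> frac_ideal I (a * u).
Proof. by apply: frac_withM => f f' If'; apply: IM. Qed.

Lemma frac_ring_loewy_bound k (g : 'I_k -> Fr) m :
  reduction frac_ring frac_max (frac_ideal I) (sumI (genI frac_ring g) (frac_ideal I)) ->
  (0 < m)%N ->
  (forall J, minimal_reduction frac_ring frac_max (frac_ideal I) J ->
     subI (powI frac_ring frac_max m) J) ->
  forall i, ~ subI (powI frac_ring frac_max i) (sumI (genI frac_ring g) (frac_ideal I)) ->
  (i <= m.-1)%N.
Proof.
exact: (reduction_loewy_bound frac_ring0 frac_ring1 frac_ringN1 frac_ringD frac_ringM
  frac_max_sub_ring frac_max0 frac_maxD frac_maxM frac_max_neq1 frac_ring_inv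
  frac_ideal_sub_max frac_ideal0 frac_idealD frac_idealM fin_gen_frac_max).
Qed.

End Ideal.

End LocalRing.

Lemma tofrac_inj (D : idomainType) : injective (@FracField.tofrac D).
Proof. by move=> a b /eqP; rewrite tofrac_eq => /eqP. Qed.

Theorem lemma3p4 (R : realType) (r : nat) (I : pred {mpoly (complex R)[r.+1]})
    (x : 'I_r.+1 -> complex R) (m : nat) (k : nat)
    (l : 'I_k -> {mpoly (complex R)[r.+1]}) :
  projective_variety I ->
  point_of I x ->
  (0 < m)%N ->
  (forall J, minimal_reductionX I x J ->
     subI (powI (loc_ring x) (loc_max x) m) J) ->
  reduction_linear_subspace I x l ->
  loewy_length_le x (lin_idealX I x l) m.-1.
Proof.
move=> [[[I0 ID IM] _] _] [[j xj_neq0] I_vanish] m_gt0 min_sub [_ red_L].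
exact: (frac_ring_loewy_bound (@tofrac_inj (homcoord R r)) xj_neq0 I0 ID IM I_vanish
  red_L m_gt0 min_sub).
Qed.
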